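(* Let $h>0$ satisfy $L_eh^2\le1/9$, where $L_e=L+2\epsilon\tilde L$. Then for all $x,v\in\mathbb{R}^{Nd}$, $$\sum_{\ell=1}^N\sup_{0\le s\le h}|q^\ell_s(x,v)-x^\ell-sv^\ell|^2\le\frac{16}5(L_eh^2)^2\sum_{\ell=1}^N\Big(|x^\ell|^2+h^2|v^\ell|^2+\frac13L_e^{-2}\epsilon^2\mathbf W_0^2\Big),$$ where $\mathbf W_0=|\nabla_1W(0,0)|$.
   Context: Standing assumptions: $\epsilon\ge0$; $V:\mathbb{R}^d\to\mathbb{R}$, $W:\mathbb{R}^d\times\mathbb{R}^d\to\mathbb{R}$ are $C^1$, $\nabla_1W$ the gradient in the first argument, constants $L>0$, $\tilde L\ge0$ with: (a) $V(0)=0$, $V\ge0$; (b) $|\nabla V(x)-\nabla V(y)|\le L|x-y|$; (d) $W$ symmetric, $|\nabla_1W(x,y)-\nabla_1W(\tilde x,\tilde y)|\le\tilde L(|x-\tilde x|+|y-\tilde y|)$. Points of $\mathbb{R}^{Nd}$: $x=(x^1,\dots,x^N)$, $x^i\in\mathbb{R}^d$. $U(x)=\sum_i\big(V(x^i)+\frac\epsilon{2N}\sum_jW(x^i,x^j)\big)$, $\nabla_iU=\partial U/\partial x^i$. Exact flow $(q_t,p_t)(x,v)$: $\dot q^i_t=p^i_t$, $\dot p^i_t=-\nabla_iU(q_t)$, $(q_0,p_0)=(x,v)$. *)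

(* R : realType. Points of R^d are functions 'I_d -> R,
   points of R^{Nd} are functions 'I_N -> 'I_d -> R (particle, coordinate). *)
From HB Require Import structures.
From mathcomp Require Import all_boot all_order all_algebra.
From mathcomp Require Import all_classical all_reals all_analysis.
Set Implicit Arguments. Unset Strict Implicit. Unset Printing Implicit Defensive.
Import Order.TTheory GRing.Theory Num.Theory.
Import numFieldNormedType.Exports.
Local Open Scope classical_set_scope.
Local Open Scope ring_scope.

Section Defs.
Variable R : realType.

Definition sqnorm (d : nat) (x : 'I_d -> R) : R := \sum_(k < d) x k ^+ 2.
Definition enorm (d : nat) (x : 'I_d -> R) : R := Num.sqrt (sqnorm x).

Definition vsub (d : nat) (x y : 'I_d -> R) : 'I_d -> R := fun k => x k - y k.
Definition vzero (d : nat) : 'I_d -> R := fun _ => 0.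

Definition is_gradient (d : nat) (F : ('I_d -> R) -> R)
    (G : ('I_d -> R) -> 'I_d -> R) : Prop :=
  forall x k, is_derive (0 : R) (1 : R)
    (fun s : R => F (fun j => x j + s * (j == k)%:R)) (G x k).

Definition is_gradient1 (d : nat) (W : ('I_d -> R) -> ('I_d -> R) -> R)
    (G1 : ('I_d -> R) -> ('I_d -> R) -> 'I_d -> R) : Prop :=
  forall x y k, is_derive (0 : R) (1 : R)
    (fun s : R => W (fun j => x j + s * (j == k)%:R) y) (G1 x y k).

Definition Upot (N d : nat) (V : ('I_d -> R) -> R)
    (W : ('I_d -> R) -> ('I_d -> R) -> R) (eps : R)
    (x : 'I_N -> 'I_d -> R) : R :=
  \sum_(i < N) (V (x i) + eps / (2 * N%:R) * \sum_(j < N) W (x i) (x j)).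

Definition is_gradientN (N d : nat) (U : ('I_N -> 'I_d -> R) -> R)
    (GU : ('I_N -> 'I_d -> R) -> 'I_N -> 'I_d -> R) : Prop :=
  forall x i k, is_derive (0 : R) (1 : R)
    (fun s : R => U (fun i' j => x i' j + s * ((i' == i) && (j == k))%:R))
    (GU x i k).

Definition is_flow (N d : nat)
    (GU : ('I_N -> 'I_d -> R) -> 'I_N -> 'I_d -> R)
    (x v : 'I_N -> 'I_d -> R) (q p : R -> 'I_N -> 'I_d -> R) : Prop :=
  q 0 = x /\ p 0 = v /\
  (forall t i k, is_derive t (1 : R) (fun tau => q tau i k) (p t i k)) /\
  (forall t i k, is_derive t (1 : R) (fun tau => p tau i k) (- GU (q t) i k)).

End Defs.

From HB Require Import structures.
From mathcomp Require Import all_boot all_order all_algebra.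
From mathcomp Require Import all_classical all_reals all_analysis.
Import Order.TTheory GRing.Theory Num.Theory.
Import numFieldNormedType.Exports.
Local Open Scope classical_set_scope.
Local Open Scope ring_scope.
From mathcomp Require Import ring lra.
Set Implicit Arguments. Unset Strict Implicit.

(* Let e_l(s) = q^l_s - x^l - s v^l.  Then e_l(0) = e_l'(0) = 0 and
   e_l'' = - nabla_l U(q_s), so a second-order Taylor bound gives
   |e_l(s)|^2 <= h^4/4 sup_[0,h] |nabla_l U(q)|^2.  Since nabla V(0) = 0 (V is
   minimal at 0) and the gradients are Lipschitz,
   |nabla_l U(q)|^2 <= 3 (L^2 |q^l|^2 + eps^2 W0^2
                          + 2 eps^2 Lt^2 / N sum_j (|q^l|^2 + |q^j|^2)),
   while |q^l_s|^2 <= 3 (|x^l|^2 + h^2 |v^l|^2 + sup |e_l|^2).  Summing over l,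
   the total error T satisfies T <= 3/4 (3 c (X + T) + h^4 N eps^2 W0^2) with
   c <= (Le h^2)^2 <= 1/81, and the T on the right is absorbed. *)

Section RealDerivatives.
Variable R : realType.
Implicit Types (f g : R -> R) (t a b : R).

Lemma is_derive_add f g t a b : is_derive t 1 f a -> is_derive t 1 g b ->
  is_derive t 1 (fun s => f s + g s) (a + b).
Proof. by move=> fa gb; have -> : (fun s => f s + g s) = f + g by []; apply: is_deriveD. Qed.

Lemma is_derive_sub f g t a b : is_derive t 1 f a -> is_derive t 1 g b ->
  is_derive t 1 (fun s => f s - g s) (a - b).
Proof. by move=> fa gb; have -> : (fun s => f s - g s) = f - g by []; apply: is_deriveB. Qed.

Lemma is_derive_mul f g t a b : is_derive t 1 f a -> is_derive t 1 g b ->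
  is_derive t 1 (fun s => f s * g s) (f t * b + g t * a).
Proof. by move=> fa gb; have -> : (fun s => f s * g s) = f * g by []; apply: is_deriveM. Qed.

Lemma is_derive_scale f t (k a : R) : is_derive t 1 f a ->
  is_derive t 1 (fun s => k * f s) (k * a).
Proof.
move=> fa; have := is_derive_mul (is_derive_cst k t 1) fa.
by rewrite mulr0 addr0.
Qed.

Lemma is_derive_sumf n (F : 'I_n -> R -> R) t (dF : 'I_n -> R) :
  (forall i, is_derive t 1 (F i) (dF i)) ->
  is_derive t 1 (fun s => \sum_(i < n) F i s) (\sum_(i < n) dF i).
Proof. by move=> FdF; rewrite -fct_sumE; apply: is_derive_sum. Qed.

Lemma is_derive_uniq f t a b : is_derive t 1 f a -> is_derive t 1 f b -> a = b.
Proof. by move=> [_ <-] [_ <-]. Qed.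

Lemma is_derive_translate f a (l : R) :
  is_derive (0 : R) 1 (fun s => f (a + s)) l -> is_derive a 1 f l.
Proof.
move=> [fa_derivable fa_val].
have quotE : (fun h : R => h^-1 *: ((f \o shift a) (h *: 1) - f a)) =
    (fun h : R => h^-1 *: (((fun s => f (a + s)) \o shift 0) (h *: 1)
                           - (fun s => f (a + s)) 0)).
  by rewrite funeqE => h /=; congr (_ *: (f _ - f _)); rewrite addr0 // addrC.
by split; [rewrite /derivable quotE | rewrite /derive quotE].
Qed.

Lemma is_derive0_quadratic_remainder f c C : 0 <= C ->
  (forall s, `|s| <= 1 -> `|f s - f 0 - c * s| <= C * s ^+ 2) ->
  is_derive (0 : R) 1 f c.
Proof.
move=> C0 rem.
have quot_cvg : (fun h : R => h^-1 *: ((f \o shift 0) (h *: 1) - f 0)) @ 0^' --> c.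
  apply/cvgrPdist_le => e e0.
  exists (Num.min 1 (e / (C + 1))) => /=; first by rewrite lt_min ltr01 divr_gt0 //; lra.
  move=> h; rewrite /= sub0r normrN lt_min => /andP[h1 he] h0.
  rewrite addr0 [_%:A]mulr1.
  have -> : c - h^-1 *: (f h - f 0) = - (h^-1 * (f h - f 0 - c * h)).
    by rewrite [_ *: _]/(h^-1 * _) mulrBr opprB mulrCA mulVf // mulr1.
  have hp : 0 < `|h| by rewrite normr_gt0.
  rewrite normrN normrM normfV ler_pdivrMl //.
  apply: (le_trans (rem h (ltW h1))); rewrite -(real_normK (num_real h)) expr2.
  have : `|h| * (C + 1) <= e by rewrite -ler_pdivlMr; [exact: ltW | lra].
  nra.
have f_derivable : derivable f 0 1 by apply/cvg_ex; exists c.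
by split => //; apply: cvg_lim quot_cvg.
Qed.

Lemma MVT_from0 g (dg : R -> R) s : (forall t, is_derive t 1 g (dg t)) ->
  exists2 xi, `|xi| <= `|s| & g s - g 0 = dg xi * s.
Proof.
move=> gdg.
have g_cont a b : {within `[a, b], continuous g}.
  by apply: derivable_within_continuous => t _; case: (gdg t).
have [s0|s0] := lerP 0 s.
  have [xi] := MVT_segment s0 (fun t _ => gdg t) (g_cont 0 s).
  rewrite in_itv /= => /andP[xi0 xis] ->; exists xi; last by rewrite subr0.
  by rewrite !ger0_norm // (le_trans xi0 xis).
have [xi] := MVT_segment (ltW s0) (fun t _ => gdg t) (g_cont s 0).
rewrite in_itv /= => /andP[sxi xi0] gE; exists xi.
  by rewrite !ler0_norm ?(ltW s0) // lerN2.
by rewrite -opprB gE sub0r mulrN opprK.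
Qed.

Lemma derive_ge0_le_from0 g (dg : R -> R) h :
  (forall t, is_derive t 1 g (dg t)) -> (forall t, 0 <= t <= h -> 0 <= dg t) ->
  forall s, 0 <= s <= h -> g 0 <= g s.
Proof.
move=> gdg dg_ge0 s /andP[s0 sh].
apply: (@ger0_derive1_ndecr _ g 0 h _ _ _ 0 s) => //.
- move=> t; rewrite in_itv /= => /andP[t0 th].
  by case: (gdg t) => _; rewrite derive1E => ->; rewrite dg_ge0 // !ltW.
- by apply: derivable_within_continuous => t _; case: (gdg t).
Qed.

Lemma taylor2_le f (f1 f2 : R -> R) M h :
  (forall t, is_derive t 1 f (f1 t)) -> (forall t, is_derive t 1 f1 (f2 t)) ->
  f 0 = 0 -> f1 0 = 0 -> (forall t, 0 <= t <= h -> f2 t <= M) ->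
  forall s, 0 <= s <= h -> f s <= M / 2 * s ^+ 2.
Proof.
move=> ff1 f1f2 f0 f10 f2M.
have f1_le t : 0 <= t <= h -> f1 t <= M * t.
  move=> th; have := derive_ge0_le_from0 (fun u => is_derive_sub
    (is_derive_scale M (is_derive_id u 1)) (f1f2 u)) _ th.
  rewrite mulr0 f10 subrr subr_ge0; apply => u uh.
  by rewrite mulr1 subr_ge0 f2M.
move=> s sh; have := derive_ge0_le_from0 (fun u => is_derive_sub
  (is_derive_scale (M / 2) (is_derive_mul (is_derive_id u 1) (is_derive_id u 1)))
  (ff1 u)) _ sh.
rewrite /= mulr0 mulr0 f0 subrr subr_ge0 -expr2; apply => u uh.
by rewrite subr_ge0 (le_trans (f1_le u uh)) //; lra.
Qed.

Lemma le_sup_image_itv f h s : {within `[0, h], continuous f} -> 0 <= s <= h ->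
  f s <= sup [set f s | s in `[0, h]].
Proof.
move=> f_cont sh; have h0 : 0 <= h by case/andP: sh => s0; apply: le_trans.
have [c _ c_max] := EVT_max h0 f_cont.
apply: sup_upper_bound; last by exists s => //=; rewrite in_itv.
split; first by exists (f 0), 0 => //=; rewrite in_itv /= lexx.
by exists (f c) => _ [t t0h <-]; apply: c_max.
Qed.

Lemma sup_image_itv_le f h B : 0 <= h ->
  (forall s, 0 <= s <= h -> f s <= B) -> sup [set f s | s in `[0, h]] <= B.
Proof.
move=> h0 fB; apply: ge_sup; first by exists (f 0), 0 => //=; rewrite in_itv /= lexx.
by move=> _ [t t0h <-]; apply: fB; move: t0h; rewrite /= in_itv.
Qed.

End RealDerivatives.

Section EuclideanNorm.
Variable R : realType.
Implicit Types (n d : nat).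

Definition dot d (u w : 'I_d -> R) : R := \sum_(k < d) u k * w k.

Lemma sqnorm_ge0 d (u : 'I_d -> R) : 0 <= sqnorm u.
Proof. by apply: sumr_ge0 => k _; apply: sqr_ge0. Qed.

Lemma sqr_enorm d (u : 'I_d -> R) : enorm u ^+ 2 = sqnorm u.
Proof. by rewrite sqr_sqrtr // sqnorm_ge0. Qed.

Lemma sqnorm_eq0 d (u : 'I_d -> R) : sqnorm u = 0 -> forall k, u k = 0.
Proof.
move=> /eqP; rewrite psumr_eq0 => [/allP u0 k|k _]; last exact: sqr_ge0.
by apply/eqP; rewrite -sqrf_eq0; apply: u0; rewrite mem_index_enum.
Qed.

Lemma ler_norm_enorm d (u : 'I_d -> R) k : `|u k| <= enorm u.
Proof.
rewrite -sqrtr_sqr; apply: ler_wsqrtr.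
rewrite /sqnorm (bigD1 k) //= lerDl; apply: sumr_ge0 => j _; exact: sqr_ge0.
Qed.

Lemma dot_sqr_le d (u w : 'I_d -> R) : dot u w ^+ 2 <= sqnorm u * sqnorm w.
Proof.
have [w0|w_neq0] := eqVneq (sqnorm w) 0.
  rewrite w0 mulr0 /dot big1 ?expr0n // => k _.
  by rewrite (sqnorm_eq0 w0) mulr0.
have w_gt0 : 0 < sqnorm w by rewrite lt_def w_neq0 sqnorm_ge0.
have : 0 <= \sum_(k < d) (sqnorm w * u k - dot u w * w k) ^+ 2.
  by apply: sumr_ge0 => k _; apply: sqr_ge0.
have -> : \sum_(k < d) (sqnorm w * u k - dot u w * w k) ^+ 2 =
    sqnorm w * (sqnorm w * sqnorm u - dot u w ^+ 2).
  rewrite (eq_bigr (fun k => sqnorm w ^+ 2 * u k ^+ 2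
    - 2 * sqnorm w * dot u w * (u k * w k) + dot u w ^+ 2 * w k ^+ 2)).
    by rewrite !big_split /= sumrN -!mulr_sumr /dot /sqnorm; ring.
  by move=> k _; ring.
by rewrite pmulr_rge0 // subr_ge0 mulrC.
Qed.

Lemma sqr_sum_le n (a : 'I_n -> R) :
  (\sum_(j < n) a j) ^+ 2 <= n%:R * \sum_(j < n) a j ^+ 2.
Proof.
have := dot_sqr_le a (fun _ => 1).
rewrite /dot /sqnorm (eq_bigr a) => [|j _]; last by rewrite mulr1.
rewrite [X in _ * X](eq_bigr (fun _ => 1)) => [|j _]; last by rewrite expr1n.
by rewrite sumr_const card_ord mulrC.
Qed.

Lemma sqnorm_scale d (c : R) (u : 'I_d -> R) :
  sqnorm (fun k => c * u k) = c ^+ 2 * sqnorm u.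
Proof. by rewrite /sqnorm mulr_sumr; apply: eq_bigr => k _; rewrite exprMn. Qed.

Lemma sqnorm_add3_le d (a b c : 'I_d -> R) :
  sqnorm (fun k => a k + b k + c k) <= 3 * (sqnorm a + sqnorm b + sqnorm c).
Proof.
rewrite /sqnorm -!big_split mulr_sumr; apply: ler_sum => k _ /=.
have := sqr_ge0 (a k - b k); have := sqr_ge0 (b k - c k); have := sqr_ge0 (a k - c k).
nra.
Qed.

Lemma sqnorm_sum_le n d (u : 'I_n -> 'I_d -> R) :
  sqnorm (fun k => \sum_(j < n) u j k) <= n%:R * \sum_(j < n) sqnorm (u j).
Proof.
rewrite /sqnorm exchange_big /= mulr_sumr; apply: ler_sum => k _.
exact: sqr_sum_le.
Qed.

Lemma sqnorm_le_enorm d d' (u : 'I_d -> R) (w : 'I_d' -> R) c : 0 <= c ->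
  enorm u <= c * enorm w -> sqnorm u <= c ^+ 2 * sqnorm w.
Proof.
move=> c0 le_uw; rewrite -!sqr_enorm -exprMn.
by rewrite lerXn2r ?nnegrE ?mulr_ge0 ?sqrtr_ge0.
Qed.

Lemma vsub0 d (u : 'I_d -> R) : vsub u (@vzero R d) = u.
Proof. by rewrite funeqE => k; rewrite /vsub /vzero subr0. Qed.

End EuclideanNorm.

Section CoordinateShift.
Variables (R : realType) (d : nat).
Implicit Types (y z : 'I_d -> R) (k : 'I_d) (s t : R).

Definition vshift y k s : 'I_d -> R := fun j => y j + s * (j == k)%:R.

Lemma vshift0 y k : vshift y k 0 = y.
Proof. by rewrite funeqE => j; rewrite /vshift mul0r addr0. Qed.

Lemma vshiftD y k t s : vshift (vshift y k t) k s = vshift y k (t + s).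
Proof. by rewrite funeqE => j; rewrite /vshift mulrDl addrA. Qed.

Lemma enorm_vshift_sub y k s t : enorm (vsub (vshift y k s) (vshift y k t)) = `|s - t|.
Proof.
rewrite /enorm /sqnorm (bigD1 k) //= big1 => [|j /negbTE jk]; last first.
  by rewrite /vsub /vshift jk !mulr0 !addr0 subrr expr0n.
by rewrite addr0 /vsub /vshift eqxx !mulr1 opprD addrACA subrr add0r sqrtr_sqr.
Qed.

Lemma is_derive_vshift (F : ('I_d -> R) -> R) G y k t : is_gradient F G ->
  is_derive t 1 (fun s => F (vshift y k s)) (G (vshift y k t) k).
Proof.
move=> FG; apply: is_derive_translate.
have : is_derive (0 : R) 1 (fun s => F (vshift (vshift y k t) k s)) _ := FG _ k.
by under eq_fun do rewrite vshiftD.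
Qed.

Lemma is_derive_vshift1 (W : ('I_d -> R) -> ('I_d -> R) -> R) G1 y z k t :
  is_gradient1 W G1 ->
  is_derive t 1 (fun s => W (vshift y k s) z) (G1 (vshift y k t) z k).
Proof.
move=> WG1; apply: is_derive_translate.
have : is_derive (0 : R) 1 (fun s => W (vshift (vshift y k t) k s) z) _ := WG1 _ z k.
by under eq_fun do rewrite vshiftD.
Qed.

End CoordinateShift.

Section Potentials.
Variables (R : realType) (d : nat).
Implicit Types (y z : 'I_d -> R) (k : 'I_d).

Lemma gradient_eq0_at_min (V : ('I_d -> R) -> R) gradV y0 : is_gradient V gradV ->
  (forall y, V y0 <= V y) -> gradV y0 = @vzero R d.
Proof.
move=> VG V_min; rewrite funeqE => k.
have V_derive := @is_derive_vshift _ _ V gradV y0 k _ VG.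
have : is_derive (0 : R) 1 (fun s => V (vshift y0 k s)) 0.
  apply: (@derive1_at_min _ _ (-1) 1).
  - lra.
  - by move=> t _; case: (V_derive t).
  - by rewrite in_itv /=; apply/andP; split; lra.
  - by move=> t _; rewrite vshift0.
by apply: is_derive_uniq; have := V_derive 0; rewrite vshift0.
Qed.

Lemma sqnorm_le_lipschitz (G : ('I_d -> R) -> 'I_d -> R) (L : R) y :
  0 <= L -> G (@vzero R d) = @vzero R d ->
  (forall y z, enorm (vsub (G y) (G z)) <= L * enorm (vsub y z)) ->
  sqnorm (G y) <= L ^+ 2 * sqnorm y.
Proof.
move=> L0 G0 G_lip; apply: sqnorm_le_enorm => //.
by have := G_lip y (@vzero R d); rewrite G0 !vsub0.
Qed.

Lemma sqnorm_sub_le_lipschitz2 (G1 : ('I_d -> R) -> ('I_d -> R) -> 'I_d -> R)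
    (Lt : R) y z : 0 <= Lt ->
  (forall y z y' z', enorm (vsub (G1 y z) (G1 y' z'))
                     <= Lt * (enorm (vsub y y') + enorm (vsub z z'))) ->
  sqnorm (vsub (G1 y z) (G1 (@vzero R d) (@vzero R d)))
    <= 2 * Lt ^+ 2 * (sqnorm y + sqnorm z).
Proof.
move=> Lt0 G1_lip; have := G1_lip y z (@vzero R d) (@vzero R d); rewrite !vsub0.
rewrite -!sqr_enorm; set a := enorm _ => a_le.
have a0 : 0 <= a by apply: sqrtr_ge0.
have y0 := sqrtr_ge0 (sqnorm y); have z0 := sqrtr_ge0 (sqnorm z).
have : a ^+ 2 <= (Lt * (enorm y + enorm z)) ^+ 2.
  by rewrite lerXn2r ?nnegrE ?mulr_ge0 ?addr_ge0.
have := sqr_ge0 (enorm y - enorm z); have := sqr_ge0 Lt; rewrite /enorm; nra.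
Qed.

(* W is only differentiable in its first argument; the mean value theorem and
   the Lipschitz bound on G1 give
   W (y + s e_k) (y + s e_k) - W y (y + s e_k) = s G1 y y k + O(s^2). *)
Lemma is_derive_diag (W : ('I_d -> R) -> ('I_d -> R) -> R) G1 (Lt : R) y k :
  0 <= Lt -> is_gradient1 W G1 -> (forall y z, W y z = W z y) ->
  (forall y z y' z', enorm (vsub (G1 y z) (G1 y' z'))
                     <= Lt * (enorm (vsub y y') + enorm (vsub z z'))) ->
  is_derive (0 : R) 1 (fun s => W (vshift y k s) (vshift y k s)) (G1 y y k + G1 y y k).
Proof.
move=> Lt0 WG1 W_sym G1_lip; set e := vshift y k.
have d_second : is_derive (0 : R) 1 (fun s => W y (e s)) (G1 y y k).
  have := is_derive_vshift1 y y k 0 WG1; rewrite vshift0.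
  by under eq_fun do rewrite W_sym.
have d_first : is_derive (0 : R) 1 (fun s => W (e s) (e s) - W y (e s)) (G1 y y k).
  apply: (@is_derive0_quadratic_remainder _ _ _ (2 * Lt)) => [|s s1]; first lra.
  have [xi xi_s W_mvt] := MVT_from0 s (fun t => is_derive_vshift1 y (e s) k t WG1).
  rewrite vshift0 in W_mvt.
  rewrite /e vshift0 subrr subr0 W_mvt -mulrBl normrM -(real_normK (num_real s)).
  have := G1_lip (e xi) (e s) (e 0) (e 0).
  rewrite !enorm_vshift_sub !subr0 /e vshift0.
  move/(le_trans (ler_norm_enorm _ k)); rewrite /vsub => G1_le.
  have : `|G1 (e xi) (e s) k - G1 y y k| <= 2 * Lt * `|s| by apply: (le_trans G1_le); nra.
  have := normr_ge0 s; rewrite /e; nra.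
by have := is_derive_add d_first d_second; under eq_fun do rewrite subrK.
Qed.

End Potentials.

Section MeanFieldGradient.
Variables (R : realType) (N d : nat) (eps Lt : R).
Variables (V : ('I_d -> R) -> R) (gradV : ('I_d -> R) -> 'I_d -> R).
Variables (W : ('I_d -> R) -> ('I_d -> R) -> R).
Variables (grad1W : ('I_d -> R) -> ('I_d -> R) -> 'I_d -> R).
Hypotheses (Lt_ge0 : 0 <= Lt) (VG : is_gradient V gradV) (WG1 : is_gradient1 W grad1W).
Hypothesis W_sym : forall y z, W y z = W z y.
Hypothesis grad1W_lip : forall y z y' z', enorm (vsub (grad1W y z) (grad1W y' z'))
  <= Lt * (enorm (vsub y y') + enorm (vsub z z')).

Lemma vshift_particle (x : 'I_N -> 'I_d -> R) i i' k s :
  (fun j => x i' j + s * ((i' == i) && (j == k))%:R) =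
  if i' == i then vshift (x i) k s else x i'.
Proof.
by case: eqP => [->|_] //=; rewrite funeqE => j; rewrite mulr0 addr0.
Qed.

Lemma is_derive_Upot_particle (x : 'I_N -> 'I_d -> R) i k :
  is_derive (0 : R) 1
    (fun s => Upot V W eps (fun i' j => x i' j + s * ((i' == i) && (j == k))%:R))
    (\sum_(i' < N) ((if i' == i then gradV (x i) k else 0) + eps / (2 * N%:R) *
      \sum_(j < N) ((if i' == i then grad1W (x i) (x j) k else 0)
                    + (if j == i then grad1W (x i) (x i') k else 0)))).
Proof.
apply: is_derive_sumf => i'; apply: is_derive_add.
  under eq_fun do rewrite vshift_particle.
  case: (i' == i); last exact: is_derive_cst.
  by have := is_derive_vshift (x i) k 0 VG; rewrite vshift0.
apply: is_derive_scale; apply: is_derive_sumf => j.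
under eq_fun do rewrite !vshift_particle.
have [ei|ni] := eqVneq i' i; have [ej|nj] := eqVneq j i;
  rewrite ?ei ?ej ?eqxx ?(negbTE ni) ?(negbTE nj) /=.
- exact: is_derive_diag Lt_ge0 WG1 W_sym grad1W_lip.
- by rewrite addr0; have := is_derive_vshift1 (x i) (x j) k 0 WG1; rewrite vshift0.
- rewrite add0r; under eq_fun do rewrite W_sym.
  by have := is_derive_vshift1 (x i) (x i') k 0 WG1; rewrite vshift0.
- by rewrite addr0; apply: is_derive_cst.
Qed.

(* The factor 1/(2N) in U is cancelled by the two occurrences of x^i in the double sum. *)
Lemma gradientN_Upot gradU : is_gradientN (Upot V W eps) gradU ->
  forall x i k, gradU x i k = gradV (x i) k + eps / N%:R * \sum_(j < N) grad1W (x i) (x j) k.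
Proof.
move=> UG x i k; rewrite (is_derive_uniq (UG x i k) (is_derive_Upot_particle x i k)).
rewrite big_split /= -big_mkcond big_pred1_eq -mulr_sumr.
rewrite (eq_bigr (fun i' => (if i' == i then \sum_(j < N) grad1W (x i) (x j) k else 0)
  + grad1W (x i) (x i') k)) => [|i' _]; last first.
  rewrite big_split /=; congr (_ + _); last by rewrite -big_mkcond big_pred1_eq.
  by case: (i' == i); rewrite // big1.
rewrite big_split /= -big_mkcond big_pred1_eq.
have N_neq0 : N%:R != 0 :> R by rewrite pnatr_eq0 -lt0n (leq_ltn_trans _ (ltn_ord i)).
by congr (_ + _); field.
Qed.

End MeanFieldGradient.

(* Apply the scalar Taylor bound to t |-> <e s, e t>, whose second derivative
   is at most |e s| sqrt K by Cauchy-Schwarz. *)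
Lemma sqnorm_taylor2_le (R : realType) d (e e1 e2 : R -> 'I_d -> R) (K h : R) :
  (forall (t : R) k, is_derive t 1 (fun s => e s k) (e1 t k)) ->
  (forall (t : R) k, is_derive t 1 (fun s => e1 s k) (e2 t k)) ->
  e 0 = @vzero R d -> e1 0 = @vzero R d ->
  (forall t, 0 <= t <= h -> sqnorm (e2 t) <= K) ->
  forall s, 0 <= s <= h -> sqnorm (e s) <= K / 4 * s ^+ 4.
Proof.
move=> ee1 e1e2 e0 e10 e2K s sh; have [s0 s_le_h] := andP sh.
have K0 : 0 <= K by apply: le_trans (e2K 0 _); rewrite ?sqnorm_ge0 ?lexx ?(le_trans s0).
set w := e s; set a := sqnorm w; have a0 : 0 <= a := sqnorm_ge0 w.
have dot_ee1 (t : R) : is_derive t 1 (fun t => dot w (e t)) (dot w (e1 t)).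
  by apply: is_derive_sumf => k; apply: is_derive_scale.
have dot_e1e2 (t : R) : is_derive t 1 (fun t => dot w (e1 t)) (dot w (e2 t)).
  by apply: is_derive_sumf => k; apply: is_derive_scale.
have dot0 u : u = @vzero R d -> dot w u = 0.
  by move=> ->; rewrite /dot big1 // => k _; rewrite mulr0.
have dot_e2_le t : 0 <= t <= h -> dot w (e2 t) <= Num.sqrt (a * K).
  move=> th; apply: le_trans (ler_norm _) _; rewrite -sqrtr_sqr ler_wsqrtr //.
  exact: le_trans (dot_sqr_le _ _) (ler_wpM2l a0 (e2K t th)).
have := taylor2_le dot_ee1 dot_e1e2 (dot0 _ e0) (dot0 _ e10) dot_e2_le sh.
have -> : dot w (e s) = a by apply: eq_bigr => k _; rewrite expr2.
have aK := sqr_sqrtr (mulr_ge0 a0 K0); have := sqrtr_ge0 (a * K).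
move: (Num.sqrt (a * K)) aK => M MM M0 a_le.
have : a * a <= a * (K / 4 * s ^+ 4).
  have := ler_pM a0 a0 a_le a_le.
  have -> : M / 2 * s ^+ 2 * (M / 2 * s ^+ 2) = M ^+ 2 / 4 * s ^+ 4 by field.
  by rewrite MM !mulrA.
have [->|a_neq0] := eqVneq a 0; first by rewrite mulr_ge0 ?exprn_ge0 ?divr_ge0.
by rewrite ler_pM2l // lt_def a_neq0.
Qed.

Lemma sum_mean_pairs (R : realFieldType) n (a : 'I_n -> R) :
  n%:R^-1 * \sum_(l < n) \sum_(j < n) (a l + a j) = 2 * \sum_(l < n) a l.
Proof.
case: n a => [|n] a; first by rewrite !big_ord0 !mulr0.
under eq_bigr do rewrite big_split /= sumr_const card_ord.
rewrite big_split /= sumrMnl sumr_const card_ord.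
by field; rewrite nat1r pnatr_eq0.
Qed.

Section FlowErrorEstimate.
Variables (R : realType) (N d : nat) (eps L Lt h : R).
Variables (gradV : ('I_d -> R) -> 'I_d -> R).
Variables (grad1W : ('I_d -> R) -> ('I_d -> R) -> 'I_d -> R).
Variables (gradU : ('I_N -> 'I_d -> R) -> 'I_N -> 'I_d -> R).
Variables (x v : 'I_N -> 'I_d -> R) (q p : R -> 'I_N -> 'I_d -> R).
Hypotheses (eps_ge0 : 0 <= eps) (Lt_ge0 : 0 <= Lt) (h_ge0 : 0 <= h).
Hypothesis gradV_le : forall y, sqnorm (gradV y) <= L ^+ 2 * sqnorm y.
Local Notation g0 := (grad1W (@vzero R d) (@vzero R d)).
Hypothesis grad1W_le : forall y z,
  sqnorm (vsub (grad1W y z) g0) <= 2 * Lt ^+ 2 * (sqnorm y + sqnorm z).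
Hypothesis gradUE : forall Q i k,
  gradU Q i k = gradV (Q i) k + eps / N%:R * \sum_(j < N) grad1W (Q i) (Q j) k.
Hypothesis flow : is_flow gradU x v q p.

Lemma sqnorm_gradU_le (Q : 'I_N -> 'I_d -> R) l :
  sqnorm (gradU Q l) <= 3 * (L ^+ 2 * sqnorm (Q l) + eps ^+ 2 * sqnorm g0
    + 2 * eps ^+ 2 * Lt ^+ 2 * (N%:R^-1 * \sum_(j < N) (sqnorm (Q l) + sqnorm (Q j)))).
Proof.
have N_gt0 : 0 < N%:R :> R by rewrite ltr0n (leq_ltn_trans _ (ltn_ord l)).
pose D j := vsub (grad1W (Q l) (Q j)) g0.
have -> : gradU Q l = fun k => gradV (Q l) k + eps * g0 k
                               + eps / N%:R * \sum_(j < N) D j k.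
  rewrite funeqE => k; rewrite gradUE /D /vsub sumrB sumr_const card_ord -mulr_natr.
  by field; rewrite lt0r_neq0.
apply: le_trans (sqnorm_add3_le _ _ _) _; apply: ler_wpM2l => //.
rewrite !sqnorm_scale; apply: lerD; first exact: lerD.
apply: le_trans (ler_wpM2l (sqr_ge0 _) (sqnorm_sum_le D)) _.
have -> : (eps / N%:R) ^+ 2 * (N%:R * \sum_(j < N) sqnorm (D j))
          = eps ^+ 2 * N%:R^-1 * \sum_(j < N) sqnorm (D j).
  by field; rewrite lt0r_neq0.
have -> : 2 * eps ^+ 2 * Lt ^+ 2 * (N%:R^-1 * \sum_(j < N) (sqnorm (Q l) + sqnorm (Q j)))
    = eps ^+ 2 * N%:R^-1 * \sum_(j < N) (2 * Lt ^+ 2 * (sqnorm (Q l) + sqnorm (Q j))).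
  by rewrite -mulr_sumr; ring.
apply: ler_wpM2l; first by rewrite mulr_ge0 ?invr_ge0 ?sqr_ge0 ?ltW.
by apply: ler_sum => j _; apply: grad1W_le.
Qed.

Definition flow_err (l : 'I_N) (s : R) : 'I_d -> R := fun k => q s l k - x l k - s * v l k.

Definition flow_err_sup l := sup [set sqnorm (flow_err l s) | s in `[0, h]].

Lemma is_derive_flow_err l (t : R) k :
  is_derive t 1 (fun s => flow_err l s k) (p t l k - v l k).
Proof.
have [_ [_ [q' _]]] := flow.
have := is_derive_sub (is_derive_sub (q' t l k) (is_derive_cst (x l k) t 1))
  (is_derive_mul (is_derive_id t 1) (is_derive_cst (v l k) t 1)).
by rewrite subr0 mulr0 add0r mulr1.
Qed.

Lemma is_derive_flow_vel l (t : R) k :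
  is_derive t 1 (fun s => p s l k - v l k) (- gradU (q t) l k).
Proof.
have [_ [_ [_ p']]] := flow.
by have := is_derive_sub (p' t l k) (is_derive_cst (v l k) t 1); rewrite subr0.
Qed.

Lemma le_flow_err_sup l s : 0 <= s <= h -> sqnorm (flow_err l s) <= flow_err_sup l.
Proof.
apply: le_sup_image_itv; apply: derivable_within_continuous => t _.
have := is_derive_sumf (F := fun k s => flow_err l s k * flow_err l s k)
  (fun k => is_derive_mul (is_derive_flow_err l t k) (is_derive_flow_err l t k)).
by case; under eq_fun do under eq_bigr do rewrite -expr2.
Qed.

Lemma flow_err_sup_ge0 l : 0 <= flow_err_sup l.
Proof. by apply: le_trans (sqnorm_ge0 _) (@le_flow_err_sup l 0 _); rewrite lexx h_ge0. Qed.

Definition flow_pos_bound j :=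
  3 * (sqnorm (x j) + h ^+ 2 * sqnorm (v j) + flow_err_sup j).

Lemma sqnorm_flow_le r j : 0 <= r <= h -> sqnorm (q r j) <= flow_pos_bound j.
Proof.
move=> rh; have [r0 r_le_h] := andP rh.
have -> : q r j = fun k => x j k + r * v j k + flow_err j r k.
  by rewrite funeqE => k; rewrite /flow_err; ring.
apply: le_trans (sqnorm_add3_le _ _ _) _; apply: ler_wpM2l => //.
rewrite sqnorm_scale; apply: lerD; last exact: le_flow_err_sup.
rewrite lerD2l; apply: ler_wpM2r; first exact: sqnorm_ge0.
by rewrite lerXn2r ?nnegrE.
Qed.

Definition flow_grad_bound l := 3 * (L ^+ 2 * flow_pos_bound l + eps ^+ 2 * sqnorm g0
  + 2 * eps ^+ 2 * Lt ^+ 2 * (N%:R^-1 * \sum_(j < N) (flow_pos_bound l + flow_pos_bound j))).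

Lemma sqnorm_gradU_flow_le r l : 0 <= r <= h ->
  sqnorm (gradU (q r) l) <= flow_grad_bound l.
Proof.
move=> rh; apply: le_trans (sqnorm_gradU_le _ _) _; apply: ler_wpM2l => //.
apply: lerD; first by rewrite lerD2r; apply: ler_wpM2l; [exact: sqr_ge0 | exact: sqnorm_flow_le].
apply: ler_wpM2l; first by rewrite !mulr_ge0.
apply: ler_wpM2l; first by rewrite invr_ge0.
by apply: ler_sum => j _; apply: lerD; apply: sqnorm_flow_le.
Qed.

Lemma flow_err_sup_le l : flow_err_sup l <= flow_grad_bound l / 4 * h ^+ 4.
Proof.
have [q0 [p0 _]] := flow.
have err0 : flow_err l 0 = @vzero R d.
  by rewrite funeqE => k; rewrite /flow_err q0 mul0r !subrr.
have vel0 : (fun k => p 0 l k - v l k) = @vzero R d.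
  by rewrite funeqE => k; rewrite p0 subrr.
have acc_le t : 0 <= t <= h -> sqnorm (fun k => - gradU (q t) l k) <= flow_grad_bound l.
  move=> th; rewrite -[leLHS]mul1r -(expr1n _ 2) -sqrrN -sqnorm_scale.
  by under eq_fun do rewrite mulN1r opprK; apply: sqnorm_gradU_flow_le.
have taylor := sqnorm_taylor2_le (is_derive_flow_err l) (is_derive_flow_vel l) err0 vel0 acc_le.
have K_ge0 : 0 <= flow_grad_bound l / 4.
  by rewrite divr_ge0 // (le_trans (sqnorm_ge0 _) (acc_le 0 _)) ?lexx.
rewrite /flow_err_sup; apply: (@sup_image_itv_le _ (fun s => sqnorm (flow_err l s))) => // s sh.
apply: le_trans (taylor _ sh) (ler_wpM2l K_ge0 _).
by case/andP: sh => s0 sh; rewrite lerXn2r ?nnegrE.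
Qed.

Lemma sum_flow_err_sup_le :
  \sum_(l < N) flow_err_sup l <= 3 / 4 *
    (3 * ((L ^+ 2 + 4 * eps ^+ 2 * Lt ^+ 2) * h ^+ 4)
       * (\sum_(l < N) (sqnorm (x l) + h ^+ 2 * sqnorm (v l)) + \sum_(l < N) flow_err_sup l)
     + h ^+ 4 * N%:R * eps ^+ 2 * sqnorm g0).
Proof.
apply: le_trans (ler_sum _ (fun l _ => flow_err_sup_le l)) _.
rewrite -!mulr_suml /flow_grad_bound -mulr_sumr !big_split /= -!mulr_sumr.
rewrite sum_mean_pairs sumr_const card_ord /flow_pos_bound -mulr_sumr !big_split /=.
by rewrite -mulr_sumr le_eqVlt; apply/orP; left; apply/eqP; ring.
Qed.

End FlowErrorEstimate.

Lemma absorb_le (R : realFieldType) (T X c B H : R) :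
  0 <= T -> 0 <= X -> 0 <= c -> c <= B -> B <= 1 / 81 -> 0 <= H ->
  T <= 3 / 4 * (3 * c * (X + T) + H) -> T <= 16 / 5 * B * X + 16 / 15 * H.
Proof. by move=> T0 X0 c0 cB B_le H0 T_le; nra. Qed.

Theorem mainTheorem12 (R : realType) (N d : nat) (eps L Lt h : R)
  (V : ('I_d -> R) -> R) (gradV : ('I_d -> R) -> 'I_d -> R)
  (W : ('I_d -> R) -> ('I_d -> R) -> R)
  (grad1W : ('I_d -> R) -> ('I_d -> R) -> 'I_d -> R)
  (gradU : ('I_N -> 'I_d -> R) -> 'I_N -> 'I_d -> R)
  (x v : 'I_N -> 'I_d -> R) (q p : R -> 'I_N -> 'I_d -> R) :
  0 <= eps -> 0 < L -> 0 <= Lt ->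
  is_gradient V gradV ->
  is_gradient1 W grad1W ->
  (* (a) *) V ((@vzero R d)) = 0 -> (forall y, 0 <= V y) ->
  (* (b) *) (forall y z, enorm (vsub (gradV y) (gradV z)) <= L * enorm (vsub y z)) ->
  (* (d) *) (forall y z, W y z = W z y) ->
  (forall y z y' z', enorm (vsub (grad1W y z) (grad1W y' z'))
                     <= Lt * (enorm (vsub y y') + enorm (vsub z z'))) ->
  is_gradientN (Upot V W eps) gradU ->
  is_flow gradU x v q p ->
  0 < h -> (L + 2 * eps * Lt) * h ^+ 2 <= 1 / 9 ->
  let Le := L + 2 * eps * Lt in
  let W0 := enorm (grad1W ((@vzero R d)) ((@vzero R d))) in
  \sum_(l < N)
     sup [set sqnorm (fun k => q s l k - x l k - s * v l k) | s in `[0, h]]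
  <= 16 / 5 * (Le * h ^+ 2) ^+ 2 *
     \sum_(l < N) (sqnorm (x l) + h ^+ 2 * sqnorm (v l)
                   + 1 / 3 * Le ^- 2 * eps ^+ 2 * W0 ^+ 2).
Proof.
move=> eps_ge0 L_gt0 Lt_ge0 VG WG1 V0 V_ge0 gradV_lip W_sym grad1W_lip UG flow
  h_gt0 Le_h2_le; cbv zeta.
set Le := L + 2 * eps * Lt; set W0 := enorm _.
have Le_gt0 : 0 < Le by rewrite /Le; have := mulr_ge0 eps_ge0 Lt_ge0; lra.
have gradV0 : gradV (@vzero R d) = @vzero R d.
  by apply: gradient_eq0_at_min VG _ => y; rewrite V0 V_ge0.
have := sum_flow_err_sup_le eps_ge0 Lt_ge0 (ltW h_gt0)
  (fun y => sqnorm_le_lipschitz y (ltW L_gt0) gradV0 gradV_lip)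
  (fun y z => sqnorm_sub_le_lipschitz2 y z Lt_ge0 grad1W_lip)
  (gradientN_Upot Lt_ge0 VG WG1 W_sym grad1W_lip UG) flow.
have -> : 16 / 5 * (Le * h ^+ 2) ^+ 2 * \sum_(l < N) (sqnorm (x l) + h ^+ 2 * sqnorm (v l)
                                           + 1 / 3 * Le ^- 2 * eps ^+ 2 * W0 ^+ 2)
    = 16 / 5 * (Le ^+ 2 * h ^+ 4) * \sum_(l < N) (sqnorm (x l) + h ^+ 2 * sqnorm (v l))
      + 16 / 15 * (h ^+ 4 * N%:R * eps ^+ 2 * sqnorm (grad1W (@vzero R d) (@vzero R d))).
  rewrite big_split /= sumr_const card_ord /W0 sqr_enorm.
  by field; rewrite gt_eqF.
have h4_ge0 : 0 <= h ^+ 4 by rewrite exprn_ge0 // ltW.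
have Le2_ge : L ^+ 2 + 4 * eps ^+ 2 * Lt ^+ 2 <= Le ^+ 2.
  have := mulr_ge0 (mulr_ge0 eps_ge0 Lt_ge0) (ltW L_gt0); rewrite /Le; nra.
apply: absorb_le.
- by apply: sumr_ge0 => l _; apply: flow_err_sup_ge0 (ltW h_gt0) flow l.
- by apply: sumr_ge0 => l _; rewrite addr_ge0 ?sqnorm_ge0 // mulr_ge0 ?sqr_ge0 ?sqnorm_ge0.
- by apply: mulr_ge0 h4_ge0; rewrite addr_ge0 ?sqr_ge0 ?mulr_ge0 ?sqr_ge0 ?ler0n.
- by apply: ler_wpM2r.
- have : 0 <= Le * h ^+ 2 by rewrite mulr_ge0 ?sqr_ge0 ?ltW.
  by move: Le_h2_le; rewrite -/Le => *; nra.
- exact: mulr_ge0 (mulr_ge0 (mulr_ge0 h4_ge0 (ler0n _ _)) (sqr_ge0 _)) (sqnorm_ge0 _).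
Qed.
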